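(* Let $\mathbf{k}$ be an algebraically closed field with $\mathrm{char}(\mathbf{k})\neq 2$, let $S=\mathbf{k}[x,y,z,w]$, and let $\mathcal{H}$ be the standard graded Hilbert scheme parametrizing homogeneous ideals $I\subseteq S$ such that $S/I$ has Hilbert function $(1,4,4,4,\ldots)$. Let $\mathcal{X}$ be the closure in $\mathcal{H}$ of the (open) locus of ideals $I\in\mathcal{H}$ that are saturated. Then the lexicographic ideal $L=(x^2,xy,xz,xw,y^2,yz,yw^2,z^4)$ of $\mathcal{H}$ belongs to $\mathcal{X}$.
   Context: The lexicographic order is taken with $x>y>z>w$; the lexicographic ideal is the unique monomial ideal in $\mathcal{H}$ each of whose graded components is spanned by the lexicographically largest monomials of that degree. *)

From HB Require Import structures.
From mathcomp Require Import all_boot all_order all_algebra.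
From mathcomp Require Import mpoly.



Unset Printing Implicit Defensive.

Import GRing.Theory.
Local Open Scope ring_scope.

Section HilbertScheme.
Variable k : fieldType.

Definition Poly := {mpoly k[4]}.

Definition xv : Poly := 'X_(@Ordinal 4 0 isT).
Definition yv : Poly := 'X_(@Ordinal 4 1 isT).
Definition zv : Poly := 'X_(@Ordinal 4 2 isT).
Definition wv : Poly := 'X_(@Ordinal 4 3 isT).

Definition is_ideal (I : Poly -> Prop) : Prop :=
  [/\ I 0, (forall p q, I p -> I q -> I (p + q)) &
      (forall p q, I q -> I (p * q))].

Definition hcomp (d : nat) (p : Poly) : Poly :=
  \sum_(m <- msupp p | mdeg m == d) p@_m *: 'X_[m].

Definition is_homog_ideal (I : Poly -> Prop) : Prop :=
  is_ideal I /\ forall p d, I p -> I (hcomp d p).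

Definition gen_ideal (gs : seq Poly) (p : Poly) : Prop :=
  exists c : 'I_(size gs) -> Poly, p = \sum_(i < size gs) c i * gs`_i.

Definition mon (d : nat) := {m : 'X_{1..4 < d.+1} | mdeg (val m) == d}.
Definition monpoly d (m : mon d) : Poly := 'X_[val (val m)].

Arguments monpoly {d}.

Definition hf (d : nat) : nat := if d == 0%N then 1%N else 4%N.
(* dim_k I_d = dim_k S_d - h(d) *)
Definition rk (d : nat) : nat := (#|{: mon d}| - hf d)%N.

Definition vec_of d (c : mon d -> k) : Poly := \sum_(m : mon d) c m *: monpoly m.

Arguments vec_of {d}.

(* B (a rk d x #mon d coefficient matrix) is a basis of the graded piece I_d *)
Definition basis_of_deg (I : Poly -> Prop) (d : nat)
    (B : 'I_(rk d) -> mon d -> k) : Prop :=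
  (forall c : 'I_(rk d) -> k,
      \sum_(i < rk d) c i *: vec_of (B i) = 0 -> forall i, c i = 0) /\
  (forall p : Poly, (I p /\ hcomp d p = p) <->
      exists c : 'I_(rk d) -> k, p = \sum_(i < rk d) c i *: vec_of (B i)).

(* k-points of the standard graded Hilbert scheme H with Hilbert function
   (1,4,4,4,...): homogeneous ideals I with dim_k (S/I)_d = hf d for all d *)
Definition in_H (I : Poly -> Prop) : Prop :=
  is_homog_ideal I /\ forall d, exists B, basis_of_deg I d B.

(* saturation: I = I : m^oo, m = (x,y,z,w) *)
Definition saturated (I : Poly -> Prop) : Prop :=
  forall f : Poly,
    (exists n : nat, forall m : 'X_{1..4}, mdeg m = n -> I ('X_[m] * f)) -> I f.

Definition sat_locus (I : Poly -> Prop) : Prop := in_H I /\ saturated I.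

(* Coordinates on prod_{d <= D} (Stiefel variety of rk d frames in S_d). *)
Definition Var (D : nat) :=
  {d : 'I_D.+1 & ('I_(rk d) * mon d)%type}.


Definition represents (D : nat) (I : Poly -> Prop) (a : Var D -> k) : Prop :=
  forall d : 'I_D.+1,
    basis_of_deg I d (fun i m => a (Tagged (fun d : 'I_D.+1 =>
                                              ('I_(rk d) * mon d)%type) (i, m))).

Definition evalV D (f : {mpoly k[#|{: Var D}|]}) (a : Var D -> k) : k :=
  f.@[fun j => a (enum_val j)].

(* I lies in the Zariski closure (in H) of the set X of points of H.
   The topology on the k-points of H is the initial topology for the
   truncation maps I |-> (I_0,...,I_D) into prod_{d<=D} Gr(rk d, S_d) (D in nat),
   each product of Grassmannians carrying its Zariski topology, described as
   the quotient topology from the product of Stiefel varieties (full-rank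
   frames), an open subset of affine space. *)
Definition in_closure (X : (Poly -> Prop) -> Prop) (I : Poly -> Prop) : Prop :=
  in_H I /\
  forall (D : nat) (a : Var D -> k), represents D I a ->
  forall f : {mpoly k[#|{: Var D}|]},
    (forall (J : Poly -> Prop) (b : Var D -> k),
        X J -> represents D J b -> evalV D f b = 0) ->
    evalV D f a = 0.

Definition Lgens : seq Poly :=
  [:: xv ^+ 2; xv * yv; xv * zv; xv * wv; yv ^+ 2; yv * zv; yv * wv ^+ 2;
      zv ^+ 4].
Definition Llex : Poly -> Prop := gen_ideal Lgens.

End HilbertScheme.

(* Fix distinct z_0, ..., z_3 in k.  For t != 0 the ideal J_t of the four
   points (t^8 z_i^2 : t^4 z_i^3 : t z_i : 1) of P^3 is saturated, and J_t
   tends to L as t -> 0.  At (t^8 s^2 : t^4 s^3 : t s : 1) the monomial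
   x^a y^b z^c w^e takes the value t^(8a+4b+c) s^(2a+3b+c).  In each degree
   d > 0 the four monomials outside L have s-exponents 0, 1, 2, 3, and every
   monomial of L_d has a larger t-exponent than all of them.  So each vector
   of a basis of L_d lifts to (J_t)_d by adding, on the standard monomials,
   the terms that cancel it at the four points (interpolating s^n at the z_i);
   these terms carry positive powers of t.  The lifts form a basis of (J_t)_d,
   since a combination of standard monomials is a polynomial of degree < 4 in
   s and cannot vanish at the four distinct z_i.  A polynomial vanishing on the
   frames of saturated ideals thus vanishes along this family for t != 0,
   hence at t = 0, on the given frame of L. *)

From Pilot Require Import Defs.
From mathcomp Require Import all_boot all_order all_algebra.
From mathcomp Require Import mpoly.
From mathcomp Require Import zify ring.
Import GRing.Theory.
Set Implicit Arguments. Unset Strict Implicit. Unset Printing Implicit Defensive.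

Definition ix : 'I_4 := @Ordinal 4 0 isT.
Definition iy : 'I_4 := @Ordinal 4 1 isT.
Definition iz : 'I_4 := @Ordinal 4 2 isT.
Definition iw : 'I_4 := @Ordinal 4 3 isT.

Lemma forall_ord4 (P : 'I_4 -> Prop) : P ix -> P iy -> P iz -> P iw -> forall j, P j.
Proof.
move=> Px Py Pz Pw [[|[|[|[|j]]]] lt_j4] //.
- by rewrite (_ : Ordinal lt_j4 = ix) //; apply/val_inj.
- by rewrite (_ : Ordinal lt_j4 = iy) //; apply/val_inj.
- by rewrite (_ : Ordinal lt_j4 = iz) //; apply/val_inj.
- by rewrite (_ : Ordinal lt_j4 = iw) //; apply/val_inj.
Qed.

Lemma big_ord4 (R : Type) (idx : R) (op : Monoid.com_law idx) (F : 'I_4 -> R) :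
  \big[op/idx]_(j < 4) F j = op (op (op (F ix) (F iy)) (F iz)) (F iw).
Proof.
rewrite !big_ord_recr big_ord0 /= Monoid.mul1m.
by congr (op (op (op (F _) (F _)) (F _)) (F _)); apply/val_inj.
Qed.

Lemma mdeg_ord4 (m : 'X_{1..4}) : mdeg m = m ix + m iy + m iz + m iw.
Proof. by rewrite mdegE big_ord4. Qed.

Lemma lep_mnm4 (g m : 'X_{1..4}) :
  (g <= m)%MM = [&& g ix <= m ix, g iy <= m iy, g iz <= m iz & g iw <= m iw].
Proof.
apply/mnm_lepP/idP => [le_gm|/and4P [lex ley lez lew]]; first by rewrite !le_gm.
exact: forall_ord4.
Qed.

Definition mnm4 (a b c e : nat) : 'X_{1..4} :=
  [multinom nth 0 [:: a; b; c; e] i | i < 4].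

Lemma mnm4E a b c e :
  [/\ mnm4 a b c e ix = a, mnm4 a b c e iy = b, mnm4 a b c e iz = c
    & mnm4 a b c e iw = e].
Proof. by rewrite /mnm4 !mnmE. Qed.

(* in_lex m <-> 'X_[m] lies in L. *)
Definition in_lex (m : 'X_{1..4}) : bool :=
  [|| 2 <= m ix, (1 <= m ix) && (1 <= m iy + m iz + m iw), 2 <= m iy,
      (1 <= m iy) && (1 <= m iz), (1 <= m iy) && (2 <= m iw) | 4 <= m iz].

Definition lex_gens : seq 'X_{1..4} :=
  [:: mnm4 2 0 0 0; mnm4 1 1 0 0; mnm4 1 0 1 0; mnm4 1 0 0 1; mnm4 0 2 0 0;
      mnm4 0 1 1 0; mnm4 0 1 0 2; mnm4 0 0 4 0].

Lemma in_lexD (g m : 'X_{1..4}) : in_lex g -> in_lex (g + m)%MM.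
Proof. rewrite /in_lex !mnmDE; lia. Qed.

Lemma lex_gens_in_lex : all in_lex lex_gens.
Proof. by rewrite /= /in_lex !mnmE. Qed.

Lemma in_lex_gen m : in_lex m -> has (fun g => (g <= m)%MM) lex_gens.
Proof. rewrite /= !lep_mnm4 /in_lex !mnmE /=; lia. Qed.

Lemma in_lex_mdeg m : in_lex m -> 2 <= mdeg m.
Proof. rewrite mdeg_ord4 /in_lex; lia. Qed.

(* The exponents of t and c in the value of 'X_[m] at
   (t^8 c^2 : t^4 c^3 : t c : 1). *)
Definition t_weight (m : 'X_{1..4}) : nat := 8 * m ix + 4 * m iy + m iz.
Definition c_weight (m : 'X_{1..4}) : nat := 2 * m ix + 3 * m iy + m iz.

Lemma c_weight_std m : ~~ in_lex m -> c_weight m < 4.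
Proof. rewrite /c_weight /in_lex; lia. Qed.

Lemma t_weight_std_lt m u :
  in_lex m -> ~~ in_lex u -> mdeg m = mdeg u -> t_weight u < t_weight m.
Proof. rewrite !mdeg_ord4 /t_weight /in_lex; lia. Qed.

Lemma c_weight_std_inj m u : ~~ in_lex m -> ~~ in_lex u ->
  mdeg m = mdeg u -> c_weight m = c_weight u -> m = u.
Proof.
rewrite !mdeg_ord4 /c_weight /in_lex => *; apply/mnmP; apply: forall_ord4; lia.
Qed.

Ltac std_witness a b c e :=
  exists (mnm4 a b c e); rewrite mdeg_ord4 /in_lex /c_weight /mnm4 !mnmE /=;
  split=> //; lia.

Lemma std_mnm_c_weight d j : 0 < d -> j < 4 ->
  exists m, [/\ mdeg m = d, ~~ in_lex m & c_weight m = j].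
Proof.
case: d => [//|[|[|d]]] _ lt_j4.
- case: j lt_j4 => [|[|[|[|j]]]] // _.
  + std_witness 0 0 0 1.
  + std_witness 0 0 1 0.
  + std_witness 1 0 0 0.
  + std_witness 0 1 0 0.
- case: j lt_j4 => [|[|[|[|j]]]] // _.
  + std_witness 0 0 0 2.
  + std_witness 0 0 1 1.
  + std_witness 0 0 2 0.
  + std_witness 0 1 0 1.
- std_witness 0 0 j (d.+3 - j).
Qed.

Local Open Scope ring_scope.

Notation mnm_of u := (bmnm (val u)).

Lemma mnm_of_inj d (u u' : mon d) : mnm_of u = mnm_of u' -> u = u'.
Proof. by move=> eq_uu'; apply/val_inj/val_inj. Qed.

Lemma mdeg_mnm_of d (u : mon d) : mdeg (mnm_of u) = d.
Proof. by case: u => ? /= /eqP. Qed.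

Lemma mon_of_mdeg d (m : 'X_{1..4}) : mdeg m = d -> exists u : mon d, mnm_of u = m.
Proof.
move=> <-; have lt_m : (mdeg m < (mdeg m).+1)%N by [].
by exists (exist _ (BMultinom lt_m) (eqxx _)).
Qed.

Lemma sum_std_c_weight (R : nmodType) d (F : nat -> R) : (0 < d)%N ->
  \sum_(u : mon d | ~~ in_lex (mnm_of u)) F (c_weight (mnm_of u)) = \sum_(j < 4) F j.
Proof.
move=> d_gt0.
rewrite (partition_big
  (fun u : mon d => inord (c_weight (mnm_of u)) : 'I_4) xpredT) //=.
apply: eq_bigr => j _.
have [m [deg_m std_m cw_m]] := std_mnm_c_weight d_gt0 (ltn_ord j).
have [u0 m_u0] := mon_of_mdeg deg_m; rewrite -{}m_u0 in std_m cw_m.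
rewrite (big_pred1 u0) ?cw_m // => u /=; apply/andP/eqP => [[std_u /eqP cw_u]|->].
  apply/mnm_of_inj/c_weight_std_inj; rewrite ?mdeg_mnm_of //.
  by rewrite cw_m -cw_u inordK // c_weight_std.
by rewrite std_m cw_m inord_val.
Qed.

Lemma card_std d : #|[pred u : mon d | ~~ in_lex (mnm_of u)]| = hf d.
Proof.
case: d => [|d].
  have [u0 u0_0] := mon_of_mdeg (@mdeg0 4).
  apply: (@eq_card1 _ u0) => u; rewrite !inE.
  have -> : u == u0 by apply/eqP/mnm_of_inj/eqP; rewrite u0_0 -mdeg_eq0 mdeg_mnm_of.
  by apply/negP => /in_lex_mdeg; rewrite mdeg_mnm_of.
rewrite -sum1_card (sum_std_c_weight (fun _ => 1%N)) //.
by rewrite sum_nat_const card_ord.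
Qed.

Lemma card_lex d : #|[pred u : mon d | in_lex (mnm_of u)]| = rk d.
Proof.
by rewrite /rk -(cardC [pred u : mon d | in_lex (mnm_of u)]) -card_std addnK.
Qed.

Section Coordinates.
Variable k : fieldType.
Implicit Types (p : Defs.Poly k) (m : 'X_{1..4}).

Lemma mcoeff_vec_of d (c : mon d -> k) (u : mon d) : (vec_of k d c)@_(mnm_of u) = c u.
Proof.
rewrite /vec_of raddf_sum (bigD1 u) //= big1 ?addr0.
  by rewrite mcoeffZ /monpoly mcoeffX eqxx mulr1.
move=> u' ne_u'u; rewrite mcoeffZ /monpoly mcoeffX.
by case: eqP => [/mnm_of_inj eq_u'u|]; [rewrite eq_u'u eqxx in ne_u'u | rewrite mulr0].
Qed.

Lemma mcoeff_vec_of_mdeg d (c : mon d -> k) m : mdeg m != d -> (vec_of k d c)@_m = 0.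
Proof.
move=> deg_m; rewrite /vec_of raddf_sum /= big1 // => u _.
rewrite mcoeffZ /monpoly mcoeffX; case: eqP => [eq_um|]; last by rewrite mulr0.
by rewrite -eq_um mdeg_mnm_of eqxx in deg_m.
Qed.

Lemma eq_vec_of d (c c' : mon d -> k) : c =1 c' -> vec_of k d c = vec_of k d c'.
Proof. by move=> eq_cc'; apply: eq_bigr => u _; rewrite eq_cc'. Qed.

Lemma vec_of_inj d (c c' : mon d -> k) : vec_of k d c = vec_of k d c' -> c =1 c'.
Proof. by move=> eq_cc' u; rewrite -mcoeff_vec_of eq_cc' mcoeff_vec_of. Qed.

Lemma vec_of0 d : vec_of k d (fun _ : mon d => 0) = 0.
Proof. by rewrite /vec_of big1 // => u _; rewrite scale0r. Qed.

Lemma vec_ofB d (c c' : mon d -> k) :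
  vec_of k d c - vec_of k d c' = vec_of k d (fun u => c u - c' u).
Proof. by rewrite /vec_of -sumrB; apply: eq_bigr => u _; rewrite scalerBl. Qed.

Lemma sum_scale_vec_of d n (c : 'I_n -> k) (B : 'I_n -> mon d -> k) :
  \sum_(i < n) c i *: vec_of k d (B i) = vec_of k d (fun u => \sum_(i < n) c i * B i u).
Proof.
rewrite /vec_of; under eq_bigr do rewrite scaler_sumr.
rewrite exchange_big /=; apply: eq_bigr => u _.
by rewrite scaler_suml; apply: eq_bigr => i _; rewrite scalerA.
Qed.

Lemma mcoeff_hcomp d p m : (hcomp k d p)@_m = if mdeg m == d then p@_m else 0.
Proof.
rewrite /hcomp raddf_sum /= -big_filter.
have [m_supp|m_nsupp] := boolP (m \in msupp p); last first.
  rewrite big1 ?(memN_msupp_eq0 m_nsupp) ?if_same // => m' _.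
  rewrite mcoeffZ mcoeffX; case: eqP => [->|]; last by rewrite mulr0.
  by rewrite (memN_msupp_eq0 m_nsupp) mul0r.
case: ifP => deg_m.
  rewrite (bigD1_seq m) /= ?mem_filter ?deg_m ?filter_uniq ?msupp_uniq //.
  rewrite mcoeffZ mcoeffX eqxx mulr1 big1 ?addr0 // => m' ne_m'm.
  by rewrite mcoeffZ mcoeffX (negbTE ne_m'm) mulr0.
rewrite big_seq big1 // => m'; rewrite mem_filter => /andP [/eqP deg_m' _].
rewrite mcoeffZ mcoeffX; case: eqP => [eq_m'm|]; last by rewrite mulr0.
by rewrite -eq_m'm deg_m' eqxx in deg_m.
Qed.

Lemma hcomp_id d p : hcomp k d (hcomp k d p) = hcomp k d p.
Proof. by apply/mpolyP => m; rewrite !mcoeff_hcomp; case: (mdeg m == d). Qed.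

Lemma hcomp_vec_of d (c : mon d -> k) : hcomp k d (vec_of k d c) = vec_of k d c.
Proof.
apply/mpolyP => m; rewrite mcoeff_hcomp; case: eqP => // /eqP deg_m.
by rewrite mcoeff_vec_of_mdeg.
Qed.

Lemma vec_of_hcomp d p : hcomp k d p = p -> p = vec_of k d (fun u => p@_(mnm_of u)).
Proof.
move=> hom_p; apply/mpolyP => m.
have [/eqP deg_m|deg_m] := boolP (mdeg m == d).
  by have [u <-] := mon_of_mdeg deg_m; rewrite mcoeff_vec_of.
by rewrite mcoeff_vec_of_mdeg // -hom_p mcoeff_hcomp (negbTE deg_m).
Qed.

Lemma mpoly_sum_hcomp p : p = \sum_(d < msize p) hcomp k d p.
Proof.
apply/mpolyP => m; rewrite raddf_sum /=.
under eq_bigr do rewrite mcoeff_hcomp.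
have [lt_m|ge_m] := ltnP (mdeg m) (msize p).
  rewrite (bigD1 (Ordinal lt_m)) //= eqxx big1 ?addr0 // => d ne_d.
  by case: eqP => // deg_m; case/eqP: ne_d; apply/val_inj; rewrite /= deg_m.
rewrite big1; first exact/memN_msupp_eq0/msize_mdeg_ge.
move=> d _; case: eqP => // deg_m.
by move: (ltn_ord d); rewrite -deg_m ltnNge ge_m.
Qed.

End Coordinates.

Section LexIdeal.
Variable k : fieldType.
Implicit Types (p : Defs.Poly k) (m : 'X_{1..4}).

Lemma X_mnm4 a b c e :
  'X_[mnm4 a b c e] = xv k ^+ a * yv k ^+ b * zv k ^+ c * wv k ^+ e :> Defs.Poly k.
Proof. by rewrite mpolyXE_id big_ord4; case: (mnm4E a b c e) => -> -> -> ->. Qed.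

Lemma LgensE : Lgens k = [seq 'X_[m] | m <- lex_gens].
Proof. by rewrite /Lgens /lex_gens /= !X_mnm4 !expr0 !expr1 !mulr1 !mul1r. Qed.

Lemma nth_Lgens j : (j < size lex_gens)%N -> (Lgens k)`_j = 'X_[nth 0%MM lex_gens j].
Proof. by move=> lt_j; rewrite LgensE (nth_map 0%MM). Qed.

Lemma gen_ideal_is_ideal (gs : seq (Defs.Poly k)) : is_ideal k (gen_ideal k gs).
Proof.
split.
- by exists (fun _ => 0); rewrite big1 // => i _; rewrite mul0r.
- move=> _ _ [c ->] [c' ->]; exists (fun i => c i + c' i).
  by rewrite -big_split; apply: eq_bigr => i _; rewrite mulrDl.
- move=> p _ [c ->]; exists (fun i => p * c i).
  by rewrite mulr_sumr; apply: eq_bigr => i _; rewrite mulrA.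
Qed.

Lemma gen_ideal_gen (gs : seq (Defs.Poly k)) i :
  (i < size gs)%N -> gen_ideal k gs gs`_i.
Proof.
move=> lt_i; exists (fun j => ((j : nat) == i)%:R).
rewrite (bigD1 (Ordinal lt_i)) //= eqxx mul1r big1 ?addr0 // => j ne_ji.
by case: eqP => [eq_ji|]; [case/eqP: ne_ji; apply/val_inj | rewrite mul0r].
Qed.

Lemma Llex_X m : in_lex m -> Llex k 'X_[m].
Proof.
move/in_lex_gen/hasP => [g g_gen le_gm].
have -> : 'X_[m] = 'X_[m - g] * 'X_[g] :> Defs.Poly k by rewrite -mpolyXD submK.
case: (gen_ideal_is_ideal (Lgens k)) => _ _; apply.
have lt_g : (index g lex_gens < size (Lgens k))%N by rewrite LgensE size_map index_mem.
by have := gen_ideal_gen lt_g; rewrite {2}LgensE (nth_map 0%MM) ?index_mem ?nth_index.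
Qed.

Lemma Llex_msuppP p : Llex k p <-> {in msupp p, forall m, in_lex m}.
Proof.
split=> [[c ->]|lex_p].
  apply: (big_ind (fun q => {in msupp q, forall m, in_lex m})).
  - by move=> m; rewrite msupp0.
  - by move=> q r lex_q lex_r m /msuppD_le; rewrite mem_cat => /orP [/lex_q|/lex_r].
  move=> i _ m; have lt_i : (i < size lex_gens)%N by case: i.
  rewrite nth_Lgens // (perm_mem (msuppMX _ _)) => /mapP [m' _ ->].
  exact/in_lexD/(allP lex_gens_in_lex)/mem_nth.
rewrite (mpolyE p); case: (gen_ideal_is_ideal (Lgens k)) => L0 LD LM.
rewrite big_seq; apply: (big_ind (Llex k)) => // m m_supp.
by rewrite -mul_mpolyC; apply/LM/Llex_X/lex_p.
Qed.

Lemma Llex_homog : is_homog_ideal k (Llex k).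
Proof.
split; first exact: gen_ideal_is_ideal.
move=> p d /Llex_msuppP lex_p; apply/Llex_msuppP => m.
rewrite mcoeff_msupp mcoeff_hcomp.
by case: ifP => _; rewrite ?eqxx // -mcoeff_msupp => /lex_p.
Qed.

Lemma Llex_vec_ofP d p : (Llex k p /\ hcomp k d p = p) <->
  exists2 g : mon d -> k, p = vec_of k d g & forall u, ~~ in_lex (mnm_of u) -> g u = 0.
Proof.
split=> [[/Llex_msuppP lex_p hom_p]|[g -> std_g0]].
  exists (fun u => p@_(mnm_of u)); first exact: vec_of_hcomp.
  by move=> u std_u; apply/eqP; rewrite mcoeff_eq0; apply: contra std_u => /lex_p.
split; last exact: hcomp_vec_of.
apply/Llex_msuppP => m; rewrite mcoeff_msupp.
have [/eqP deg_m|deg_m] := boolP (mdeg m == d); last first.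
  by rewrite mcoeff_vec_of_mdeg ?eqxx.
have [u <-] := mon_of_mdeg deg_m; rewrite mcoeff_vec_of.
by apply: contraR => /std_g0 ->.
Qed.

Lemma Llex_basis d : exists B, basis_of_deg k (Llex k) d B.
Proof.
pose A := [pred u : mon d | in_lex (mnm_of u)].
have card_A : rk d = #|A| by rewrite card_lex.
pose ev i := enum_val (cast_ord card_A i).
have lex_ev i : in_lex (mnm_of (ev i)) by have := enum_valP (cast_ord card_A i).
have ev_inj : injective ev by move=> i j /enum_val_inj /cast_ord_inj.
have sum_ev (c : 'I_(rk d) -> k) i : \sum_(j < rk d) c j * (ev i == ev j)%:R = c i.
  rewrite (bigD1 i) //= eqxx mulr1 big1 ?addr0 // => j ne_ji.
  by rewrite (inj_eq ev_inj) eq_sym (negbTE ne_ji) mulr0.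
have std_ev0 (c : 'I_(rk d) -> k) u : ~~ in_lex (mnm_of u) ->
    \sum_(j < rk d) c j * (u == ev j)%:R = 0.
  move=> std_u; rewrite big1 // => j _.
  case: eqP => [eq_u|]; last by rewrite mulr0.
  by move: (lex_ev j); rewrite -eq_u (negbTE std_u).
exists (fun i u => (u == ev i)%:R); split.
  move=> c; rewrite sum_scale_vec_of -(@vec_of0 k d) => /vec_of_inj eq0 i.
  by rewrite -(eq0 (ev i)) sum_ev.
move=> p; rewrite Llex_vec_ofP; split=> [[g -> std_g0]|[c ->]].
  exists (fun i => g (ev i)); rewrite sum_scale_vec_of; apply: eq_vec_of => u.
  have [lex_u|std_u] := boolP (u \in A); last by rewrite std_g0 ?std_ev0.
  rewrite -(enum_rankK_in lex_u lex_u).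
  by rewrite -(cast_ordKV card_A (enum_rank_in _ _)) sum_ev.
by rewrite sum_scale_vec_of; eexists; [reflexivity | exact: std_ev0].
Qed.

Lemma Llex_in_H : in_H k (Llex k).
Proof. by split; [exact: Llex_homog | exact: Llex_basis]. Qed.

Lemma Llex_basis_std0 d (B : 'I_(rk d) -> mon d -> k) :
  basis_of_deg k (Llex k) d B -> forall i u, ~~ in_lex (mnm_of u) -> B i u = 0.
Proof.
case=> _ span_B i u std_u; set p := vec_of k d (B i).
have /Llex_vec_ofP [g eq_g std_g0] : Llex k p /\ hcomp k d p = p.
  apply/span_B; exists (fun j => (j == i)%:R).
  rewrite (bigD1 i) //= eqxx scale1r big1 ?addr0 // => j /negbTE ->.
  by rewrite scale0r.
by rewrite (vec_of_inj eq_g) std_g0.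
Qed.

End LexIdeal.

Section ConePoints.
Variable k : fieldType.
Implicit Types (p : Defs.Poly k) (m : 'X_{1..4}) (l t c : k).

Definition cone_pt l t c : 'I_4 -> k :=
  fun j => l * nth 0 [:: t ^+ 8 * c ^+ 2; t ^+ 4 * c ^+ 3; t * c; 1] j.

Lemma mevalX_cone_pt l t c m :
  ('X_[m] : Defs.Poly k).@[cone_pt l t c] =
  l ^+ mdeg m * (t ^+ t_weight m * c ^+ c_weight m).
Proof.
rewrite mevalX big_ord4 /cone_pt mdeg_ord4 /t_weight /c_weight /=.
rewrite !exprMn !expr1n !mulr1 !exprD.
move: (l ^+ m ix) (l ^+ m iy) (l ^+ m iz) (l ^+ m iw) => *.
move: (t ^+ m ix) (t ^+ m iy) (t ^+ m iz) (c ^+ m ix) (c ^+ m iy) (c ^+ m iz) => *.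
ring.
Qed.

Lemma meval_vec_of_cone_pt d (g : mon d -> k) l t c :
  (vec_of k d g).@[cone_pt l t c] =
  l ^+ d * \sum_(u : mon d) g u * (t ^+ t_weight (mnm_of u) * c ^+ c_weight (mnm_of u)).
Proof.
rewrite /vec_of raddf_sum mulr_sumr /=; apply: eq_bigr => u _.
by rewrite mevalZ /monpoly mevalX_cone_pt mdeg_mnm_of mulrCA.
Qed.

Lemma meval_hcomp_cone_pt d p l t c :
  (hcomp k d p).@[cone_pt l t c] = l ^+ d * (hcomp k d p).@[cone_pt 1 t c].
Proof.
by rewrite (vec_of_hcomp (hcomp_id d p)) !meval_vec_of_cone_pt expr1n mul1r.
Qed.

Definition cone_poly p t c : {poly k} :=
  \sum_(d < msize p) (hcomp k d p).@[cone_pt 1 t c] *: 'X^d.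

Lemma horner_cone_poly p t c l : (cone_poly p t c).[l] = p.@[cone_pt l t c].
Proof.
rewrite /cone_poly horner_sum [in RHS](mpoly_sum_hcomp p) raddf_sum /=.
by apply: eq_bigr => d _; rewrite hornerZ hornerXn [RHS]meval_hcomp_cone_pt mulrC.
Qed.

Lemma coef_cone_poly p t c d :
  (d < msize p)%N -> (cone_poly p t c)`_d = (hcomp k d p).@[cone_pt 1 t c].
Proof.
move=> lt_d; rewrite /cone_poly coef_sum (bigD1 (Ordinal lt_d)) //=.
rewrite coefZ coefXn eqxx mulr1 big1 ?addr0 // => e ne_ed; rewrite coefZ coefXn.
by case: eqP => [eq_ed|]; [case/eqP: ne_ed; apply/val_inj | rewrite mulr0].
Qed.

End ConePoints.

Lemma poly_eq0_on_nonzero (k : closedFieldType) (G : {poly k}) :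
  (forall x, x != 0 -> G.[x] = 0) -> G = 0.
Proof.
move=> G0; apply/eqP; apply: contraT => nz_G.
have /closed_nonrootP [x] : G * 'X != 0 by rewrite mulf_neq0 // polyX_eq0.
rewrite /root hornerM hornerX.
have [->|nz_x] := eqVneq x 0; first by rewrite mulr0 eqxx.
by rewrite G0 // mul0r eqxx.
Qed.

Lemma horner_mmap_polyC (R : comNzRingType) n (f : {mpoly R[n]})
    (h : 'I_n -> {poly R}) t :
  (mmap polyC h f).[t] = f.@[fun j => (h j).[t]].
Proof.
rewrite /meval /mmap horner_sum; apply: eq_bigr => m _.
rewrite hornerM hornerC /mmap1 horner_prod; congr (_ * _).
by apply: eq_bigr => i _; rewrite horner_exp.
Qed.

Section PointsIdeal.
Variables (k : closedFieldType) (z : 'I_4 -> k).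
Implicit Types (p : Defs.Poly k) (t : k).

(* The ideal of the four points cone_pt 1 t (z i) of P^3, as the ideal of
   their affine cones. *)
Definition pts_ideal t (p : Defs.Poly k) : Prop :=
  forall i l, p.@[cone_pt l t (z i)] = 0.

Lemma pts_ideal_is_ideal t : is_ideal k (pts_ideal t).
Proof.
split.
- by move=> i l; rewrite meval0.
- by move=> p q p0 q0 i l; rewrite mevalD p0 q0 addr0.
- by move=> p q q0 i l; rewrite mevalM q0 mulr0.
Qed.

Lemma pts_ideal_homog t : is_homog_ideal k (pts_ideal t).
Proof.
split; first exact: pts_ideal_is_ideal.
move=> p d p0 i l.
have cone_p0 : cone_poly p t (z i) = 0.
  by apply: poly_eq0_on_nonzero => x _; rewrite horner_cone_poly p0.
rewrite meval_hcomp_cone_pt.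
have [lt_d|ge_d] := ltnP d (msize p).
  by rewrite -coef_cone_poly // cone_p0 coef0 mulr0.
suff -> : hcomp k d p = 0 by rewrite meval0 mulr0.
apply/mpolyP => m; rewrite mcoeff_hcomp mcoeff0; case: eqP => // deg_m.
by apply/memN_msupp_eq0/msize_mdeg_ge; rewrite deg_m.
Qed.

(* The last coordinate of cone_pt l t c is l, so w^n f in the ideal forces
   f to vanish at every l != 0. *)
Lemma pts_ideal_saturated t : saturated k (pts_ideal t).
Proof.
move=> f [n wnf0] i l.
rewrite -horner_cone_poly; suff -> : cone_poly f t (z i) = 0 by rewrite horner0.
apply: poly_eq0_on_nonzero => x nz_x; rewrite horner_cone_poly.
pose wn := (U_(iw) *+ n)%MM.
have deg_wn : mdeg wn = n by rewrite mdegMn mdeg1 mul1n.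
have := wnf0 wn deg_wn i x; rewrite mevalM mevalX_cone_pt deg_wn.
rewrite /t_weight /c_weight !mulmnE !mnm1E /= !muln0 !expr0 !mulr1 => /eqP.
by rewrite mulf_eq0 expf_eq0 (negbTE nz_x) andbF => /eqP.
Qed.

End PointsIdeal.

Section Frames.
Variables (k : closedFieldType) (z : 'I_4 -> k).
Hypothesis z_inj : injective z.

Definition nodes : seq k := [seq z i | i <- enum 'I_4].
Definition node_poly : {poly k} := \prod_(a <- nodes) ('X - a%:P).

Lemma nodes_uniq : uniq nodes.
Proof. by rewrite map_inj_uniq ?enum_uniq. Qed.

Lemma size_node_poly : size node_poly = 5%N.
Proof. by rewrite /node_poly size_prod_XsubC size_map size_enum_ord. Qed.

Definition rem_pow (n : nat) : {poly k} := 'X^n %% node_poly.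

Lemma size_rem_pow n : (size (rem_pow n) <= 4)%N.
Proof.
by rewrite -ltnS -size_node_poly ltn_modp -size_poly_eq0 size_node_poly.
Qed.

Lemma horner_rem_pow n i : (rem_pow n).[z i] = z i ^+ n.
Proof.
have /(congr1 (horner^~ (z i))) := divp_eq 'X^n node_poly.
rewrite hornerD hornerM hornerXn -/(rem_pow n) => ->.
suff /eqP -> : root node_poly (z i) by rewrite mulr0 add0r.
by rewrite root_prod_XsubC map_f ?mem_enum.
Qed.

Lemma std_coef_horner d (q : {poly k}) c : (0 < d)%N -> (size q <= 4)%N ->
  \sum_(u : mon d | ~~ in_lex (mnm_of u))
     q`_(c_weight (mnm_of u)) * c ^+ c_weight (mnm_of u) = q.[c].
Proof.
move=> d_gt0 size_q.
by rewrite (sum_std_c_weight (fun j => q`_j * c ^+ j)) // -horner_coef_wide.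
Qed.

(* The lift of beta : L_d to (pts_ideal t)_d, as a polynomial in t: on a
   standard monomial u, rem_pow replaces c^(c_weight m) by its interpolant so
   that the lift vanishes at the four points; t_weight_std_lt makes the
   exponents of t positive. *)
Definition frame_poly d (beta : mon d -> k) (u : mon d) : {poly k} :=
  if in_lex (mnm_of u) then (beta u)%:P
  else - \sum_(m : mon d | in_lex (mnm_of m))
           (beta m * (rem_pow (c_weight (mnm_of m)))`_(c_weight (mnm_of u)))
             *: 'X^(t_weight (mnm_of m) - t_weight (mnm_of u)).

Definition frame d t (beta : mon d -> k) (u : mon d) : k := (frame_poly beta u).[t].

Lemma frame_lex d t (beta : mon d -> k) u :
  in_lex (mnm_of u) -> frame t beta u = beta u.
Proof. by rewrite /frame /frame_poly => ->; rewrite hornerC. Qed.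

Lemma frame_std d t (beta : mon d -> k) u : ~~ in_lex (mnm_of u) ->
  frame t beta u =
  - \sum_(m : mon d | in_lex (mnm_of m))
      beta m * (rem_pow (c_weight (mnm_of m)))`_(c_weight (mnm_of u))
        * t ^+ (t_weight (mnm_of m) - t_weight (mnm_of u)).
Proof.
rewrite /frame /frame_poly => /negbTE ->; rewrite hornerN horner_sum.
by congr (- _); apply: eq_bigr => m _; rewrite hornerZ hornerXn.
Qed.

Lemma frame_at0 d (beta : mon d -> k) u :
  (forall u, ~~ in_lex (mnm_of u) -> beta u = 0) -> frame 0 beta u = beta u.
Proof.
move=> std_beta0; have [lex_u|std_u] := boolP (in_lex (mnm_of u)).
  exact: frame_lex.
rewrite frame_std // std_beta0 // big1 ?oppr0 // => m lex_m.
rewrite expr0n subn_eq0 leqNgt t_weight_std_lt ?mulr0 //.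
by rewrite !mdeg_mnm_of.
Qed.

Lemma sum_scale_vec_of_frame d n t (c : 'I_n -> k) (B : 'I_n -> mon d -> k) :
  \sum_(i < n) c i *: vec_of k d (frame t (B i)) =
  vec_of k d (frame t (fun u => \sum_(i < n) c i * B i u)).
Proof.
rewrite sum_scale_vec_of; apply: eq_vec_of => u.
have [lex_u|std_u] := boolP (in_lex (mnm_of u)).
  by rewrite frame_lex //; apply: eq_bigr => i _; rewrite frame_lex.
rewrite frame_std //; under eq_bigr do rewrite frame_std // mulrN mulr_sumr.
rewrite sumrN exchange_big /=; congr (- _); apply: eq_bigr => m _.
by rewrite !big_distrl /=; apply: eq_bigr => i _; rewrite !mulrA.
Qed.

Lemma frame_in_pts_ideal d t (beta : mon d -> k) :
  pts_ideal z t (vec_of k d (frame t beta)).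
Proof.
move=> i l; rewrite meval_vec_of_cone_pt; apply/eqP; rewrite mulf_eq0; apply/orP; right.
rewrite (bigID (fun u : mon d => in_lex (mnm_of u))) /= addr_eq0.
under eq_bigr => u lex_u do rewrite frame_lex //.
under [X in _ == - X]eq_bigr => u std_u do rewrite frame_std // mulNr big_distrl /=.
rewrite sumrN opprK exchange_big /=; apply/eqP/eq_bigr => m lex_m.
have d_gt0 : (0 < d)%N.
  by rewrite -(mdeg_mnm_of m); apply: leq_trans (in_lex_mdeg lex_m).
rewrite -[z i ^+ _](horner_rem_pow _ i) -(std_coef_horner _ d_gt0) ?size_rem_pow //.
rewrite !mulr_sumr; apply: eq_bigr => u std_u.
have le_tw : (t_weight (mnm_of u) <= t_weight (mnm_of m))%N.
  by apply/ltnW/t_weight_std_lt; rewrite ?mdeg_mnm_of.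
rewrite -[in t ^+ t_weight (mnm_of m)](subnK le_tw) exprD.
move: (beta m) (_`_(c_weight _)) (t ^+ (_ - _)) (t ^+ t_weight _) => *.
move: (z i ^+ c_weight _) => *.
ring.
Qed.

(* R(c) below is the value of vec_of rho at cone_pt 1 t c: a polynomial of
   degree < 4 vanishing at the four nodes. *)
Lemma pts_ideal_std_eq0 d t (rho : mon d -> k) : t != 0 ->
    (forall u, in_lex (mnm_of u) -> rho u = 0) -> pts_ideal z t (vec_of k d rho) ->
  forall u, rho u = 0.
Proof.
move=> nz_t lex_rho0 rho_pts u0.
have [|std_u0] := boolP (in_lex (mnm_of u0)); first exact: lex_rho0.
pose R : {poly k} := \sum_(u : mon d | ~~ in_lex (mnm_of u))
  (rho u * t ^+ t_weight (mnm_of u)) *: 'X^(c_weight (mnm_of u)).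
have size_R : (size R <= 4)%N.
  apply: (big_ind (fun q : {poly k} => size q <= 4)%N).
  - by rewrite size_poly0.
  - move=> p q size_p size_q; apply: leq_trans (size_polyD _ _) _.
    by rewrite geq_max size_p size_q.
  move=> u std_u; apply: leq_trans (size_scale_leq _ _) _.
  by rewrite size_polyXn; apply: c_weight_std.
have R_nodes : all (root R) nodes.
  apply/allP => _ /mapP [i _ ->]; rewrite /root.
  have := rho_pts i 1; rewrite meval_vec_of_cone_pt expr1n mul1r => <-.
  rewrite /R horner_sum [X in _ == X](bigID (fun u : mon d => in_lex (mnm_of u))) /=.
  rewrite [X in _ == X + _]big1 ?add0r; last by move=> u /lex_rho0 ->; rewrite mul0r.
  by apply/eqP/eq_bigr => u _; rewrite hornerZ hornerXn mulrA.
have R0 : R = 0.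
  apply/eqP; apply: contraT => nz_R.
  have := max_poly_roots nz_R R_nodes nodes_uniq.
  by rewrite size_map size_enum_ord ltnNge size_R.
have /eqP := congr1 (fun q : {poly k} => q`_(c_weight (mnm_of u0))) R0.
rewrite coef0 /R coef_sum (bigD1 u0) //= coefZ coefXn eqxx mulr1 big1 ?addr0.
  by rewrite mulf_eq0 expf_eq0 (negbTE nz_t) andbF orbF => /eqP.
move=> u /andP [std_u ne_uu0]; rewrite coefZ coefXn.
case: eqP => [/esym eq_cw|]; last by rewrite mulr0.
case/eqP: ne_uu0; apply/mnm_of_inj/c_weight_std_inj => //.
by rewrite !mdeg_mnm_of.
Qed.

Lemma frame_basis d t (B : 'I_(rk d) -> mon d -> k) : t != 0 ->
  basis_of_deg k (Llex k) d B ->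
  basis_of_deg k (pts_ideal z t) d (fun i => frame t (B i)).
Proof.
move=> nz_t B_basis; have B_std0 := Llex_basis_std0 B_basis.
case: B_basis => B_free B_span; split.
  move=> c; rewrite sum_scale_vec_of_frame -(@vec_of0 k d) => /vec_of_inj frame0.
  apply: B_free; rewrite sum_scale_vec_of -(@vec_of0 k d); apply: eq_vec_of => u.
  have [lex_u|std_u] := boolP (in_lex (mnm_of u)).
    by have := frame0 u; rewrite frame_lex.
  by rewrite big1 // => i _; rewrite B_std0 ?mulr0.
move=> p; split=> [[p_pts hom_p]|[c ->]]; last first.
  rewrite sum_scale_vec_of_frame.
  by split; [exact: frame_in_pts_ideal | exact: hcomp_vec_of].
pose g (u : mon d) : k := if in_lex (mnm_of u) then p@_(mnm_of u) else 0.
have [c g_c] : exists c, vec_of k d g = \sum_(i < rk d) c i *: vec_of k d (B i).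
  by apply/B_span/Llex_vec_ofP; exists g => // u /negbTE std_u; rewrite /g std_u.
have g_sum u : g u = \sum_(i < rk d) c i * B i u.
  by rewrite -(mcoeff_vec_of g u) g_c sum_scale_vec_of mcoeff_vec_of.
exists c; rewrite sum_scale_vec_of_frame; apply/eqP; rewrite -subr_eq0.
rewrite {1}(vec_of_hcomp hom_p) vec_ofB -(@vec_of0 k d); apply/eqP/eq_vec_of.
apply: (pts_ideal_std_eq0 nz_t) => [u lex_u|].
  by rewrite frame_lex // -g_sum /g lex_u subrr.
rewrite -vec_ofB -(vec_of_hcomp hom_p) => i l.
by rewrite mevalB p_pts frame_in_pts_ideal subrr.
Qed.

Lemma pts_ideal_sat_locus t : t != 0 -> sat_locus k (pts_ideal z t).
Proof.
move=> nz_t; split; last exact: pts_ideal_saturated.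
split=> [|d]; first exact: pts_ideal_homog.
have [B B_basis] := Llex_basis k d.
by exists (fun i => frame t (B i)); apply: frame_basis.
Qed.

Lemma Llex_in_closure : in_closure k (sat_locus k) (Llex k).
Proof.
split=> [|D a a_L f f_sat]; first exact: Llex_in_H.
pose frame_var (v : Var D) : {poly k} :=
  let: existT d (i, u) := v in frame_poly (fun u' => a (existT _ d (i, u'))) u.
pose F := mmap polyC (fun j => frame_var (enum_val j)) f.
have F0 : F = 0.
  apply: poly_eq0_on_nonzero => t nz_t; rewrite horner_mmap_polyC.
  have := f_sat _ (fun v => (frame_var v).[t]) (pts_ideal_sat_locus nz_t).
  by apply=> d; apply: frame_basis.
rewrite /evalV -[RHS](horner0 0) -F0 horner_mmap_polyC.
apply: meval_eq => j; case: (enum_val j) => d [i u] /=.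
by rewrite -/(frame 0 _ u) frame_at0 //; exact: (Llex_basis_std0 (a_L d)).
Qed.

End Frames.

Lemma exists_inj_ord (k : closedFieldType) n : exists z : 'I_n -> k, injective z.
Proof.
suff [s [uniq_s size_s]] : exists s : seq k, uniq s /\ size s = n.
  exists (fun i => nth 0 s i) => i j /eqP.
  by rewrite nth_uniq ?size_s // => /eqP/val_inj.
elim: n => [|n [s [uniq_s size_s]]]; first by exists [::].
have nz_s : \prod_(a <- s) ('X - a%:P) != 0 :> {poly k}.
  exact/monic_neq0/monic_prod_XsubC.
have [x] := closed_nonrootP _ nz_s; rewrite root_prod_XsubC => s'x.
by exists (x :: s); rewrite /= s'x uniq_s size_s.
Qed.

Theorem lemma4p1 (k : closedFieldType) (hchar : (2%N \notin [pchar k])) :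
  in_closure k (sat_locus k) (Llex k).
Proof.
have [z z_inj] := exists_inj_ord k 4.
exact: Llex_in_closure z_inj.
Qed.
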